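(* Let $R_{e,q}=\mathbb{F}_q[u]/\langle u^e-1\rangle$, where $q=p^m$ with $p$ an odd prime and $q=et+1$ for integers $e\geq 2,t\geq 1$. Then every cyclic code of length $n$ over $R_{e,q}$ is principally generated; that is, $R_{e,q}[x]/\langle x^n-1\rangle$ is a principal ideal ring.
   Context: Cyclic codes of length $n$ over $R_{e,q}$ (submodules of $R_{e,q}^n$ closed under cyclic shift) are identified with ideals of $R_{e,q}[x]/\langle x^n-1\rangle$. *)

From HB Require Import structures.
From mathcomp Require Import all_boot all_algebra.
Set Implicit Arguments. Unset Strict Implicit. Unset Printing Implicit Defensive.
Import GRing.Theory.
Local Open Scope ring_scope.

(* R_{e,q} = F_q[u]/<u^e - 1>, realized with MathComp's qpoly construction
   (polynomials reduced modulo the monic polynomial u^e - 1). *)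
Definition Req (F : finFieldType) (e : nat) : comNzRingType :=
  {poly %/ ('X^e - 1 : {poly F})}.

Definition cyc_ring (F : finFieldType) (e n : nat) : comNzRingType :=
  {poly %/ ('X^n - 1 : {poly Req F e})}.

Definition is_ideal (T : comNzRingType) (I : T -> Prop) : Prop :=
  [/\ I 0,
      (forall x y, I x -> I y -> I (x - y)) &
      (forall a x, I x -> I (a * x))].

Definition is_principal (T : comNzRingType) (I : T -> Prop) : Prop :=
  exists g : T, forall x, I x <-> exists a : T, x = a * g.

Definition principal_ideal_ring (T : comNzRingType) : Prop :=
  forall I : T -> Prop, is_ideal I -> is_principal I.

(* Since e divides q - 1, F_q contains a primitive e-th root of unity z, so
   u^e - 1 has the e distinct roots z^k.  Evaluation at these roots and
   Lagrange interpolation split R_{e,q} = F_q[u]/<u^e - 1> into e copies of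
   F_q, cut out by orthogonal idempotents eps_k.  Every element of
   R_{e,q}[x]/<x^n - 1> is then a sum of terms eps_k f_k(x) with f_k in F_q[x],
   and an ideal I is generated by sum_k eps_k g_k, where g_k generates the
   ideal {f | eps_k f in I} of the principal ideal domain F_q[x].  Neither the
   characteristic of F_q nor the length n plays any role. *)

From HB Require Import structures.
From mathcomp Require Import all_boot all_algebra cyclic finfield.
From Stdlib Require Import Classical.
Set Implicit Arguments. Unset Strict Implicit. Unset Printing Implicit Defensive.
Import GRing.Theory.
Local Open Scope ring_scope.

Lemma ex_argmin_nat (A : Type) (f : A -> nat) (P : A -> Prop) :
  (exists a, P a) -> exists2 a, P a & forall b, P b -> (f a <= f b)%N.
Proof.
move=> [a0 Pa0]; apply: NNPP => no_min.
suff no_P n a : (f a <= n)%N -> ~ P a by exact: no_P _ _ (leqnn _) Pa0.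
elim: n a => [|n IHn] a fa Pa; apply: no_min; exists a => // b Pb.
  exact: leq_trans fa (leq0n _).
by rewrite (leq_trans fa) // ltnNge; apply/negP => /IHn; apply.
Qed.

Lemma poly_principal_ideal_ring (K : fieldType) : principal_ideal_ring {poly K}.
Proof.
move=> J [J0 JB JM].
have [J_neq0 | J_eq0] := classic (exists g, J g /\ g != 0); last first.
  exists 0 => x; split=> [Jx | [a ->]]; last by rewrite mulr0.
  exists 0; rewrite mulr0; have [//|x_neq0] := eqVneq x 0; by case: J_eq0; exists x.
have [g [Jg g_neq0] g_min] := ex_argmin_nat (size : {poly K} -> nat) J_neq0.
exists g => x; split=> [Jx | [a ->]]; last exact: JM.
have Jr : J (x %% g).
  have -> : x %% g = x - x %/ g * g by rewrite {2}(divp_eq x g) addrC addKr.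
  by apply: JB => //; exact: JM.
exists (x %/ g); rewrite {1}(divp_eq x g); suff -> : x %% g = 0 by rewrite addr0.
have := ltn_modp x g; rewrite g_neq0.
by apply: contraTeq => r_neq0; rewrite -leqNgt g_min.
Qed.

Section OrthogonalIdempotents.
Variables (S T : comNzRingType) (I : finType).
Variables (iota : {rmorphism S -> T}) (eps : I -> T).
Hypothesis eps_orth : forall i j, eps i * eps j = if i == j then eps i else 0.

Lemma mul_idem_sum j (u : I -> T) : eps j * (\sum_i eps i * u i) = eps j * u j.
Proof.
rewrite mulr_sumr (bigD1 j) //= big1 ?addr0; first by rewrite mulrA eps_orth eqxx.
by move=> i /negbTE ij; rewrite mulrA eps_orth eq_sym ij mul0r.
Qed.

Lemma mul_idem_sums (u v : I -> T) :
  (\sum_i eps i * u i) * (\sum_i eps i * v i) = \sum_i eps i * (u i * v i).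
Proof.
by rewrite mulr_suml; apply: eq_bigr => i _; rewrite mulrAC mul_idem_sum mulrAC -mulrA.
Qed.

Hypothesis eps_span : forall t, exists f : I -> S, t = \sum_i eps i * iota (f i).

Lemma principal_ideal_ring_idem_decomp :
  principal_ideal_ring S -> principal_ideal_ring T.
Proof.
move=> pirS Q [Q0 QB QM].
have QD x y : Q x -> Q y -> Q (x + y).
  by move=> Qx Qy; rewrite -[y]opprK -[- y]sub0r; apply: (QB) => //; apply: QB.
have ideal_comp i : is_ideal (fun s => Q (eps i * iota s)).
  split=> [|x y Qx Qy|a x Qx]; first by rewrite rmorph0 mulr0.
    by rewrite rmorphB mulrBr; apply: QB.
  by rewrite rmorphM mulrCA; apply: QM.
have [g gP] := fin_all_exists (fun i => pirS _ (ideal_comp i)).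
exists (\sum_i eps i * iota (g i)) => x; split=> [Qx | [a ->]]; last first.
  apply: QM; apply: (big_ind Q) => // i _.
  by apply/(gP i (g i)); exists 1; rewrite mul1r.
have [f xE] := eps_span x.
have Qf i : Q (eps i * iota (f i)).
  by rewrite -(mul_idem_sum i (iota \o f)) -xE; apply: QM.
have [a aP] := fin_all_exists (fun i => (gP i (f i)).1 (Qf i)).
exists (\sum_i eps i * iota (a i)); rewrite mul_idem_sums xE.
by apply: eq_bigr => i _; rewrite aP rmorphM.
Qed.

End OrthogonalIdempotents.

Section QpolyFacts.
Variables (A : nzRingType) (h : {poly A}).

Lemma val_qpolyK (c : {poly %/ h}) : in_qpoly h (val c) = c.
Proof. by apply: val_inj; apply: in_qpoly_small; rewrite size_mk_monic. Qed.

Lemma in_qpolyC a : in_qpoly h a%:P = qpolyC h a.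
Proof.
apply: val_inj; apply: in_qpoly_small.
exact: leq_ltn_trans (size_polyC_leq1 a) (size_mk_monic_gt1 h).
Qed.

End QpolyFacts.

Lemma mk_monic_Xn_sub1 (A : nzRingType) n :
  (0 < n)%N -> mk_monic ('X^n - 1 : {poly A}) = 'X^n - 1.
Proof.
by move=> n_gt0; rewrite /mk_monic -polyC1 size_XnsubC // monicXnsubC // ltnS n_gt0.
Qed.

Section QpolyEval.
Variables (A : comNzRingType) (h : {poly A}) (x : A).
Hypothesis hx : root (mk_monic h) x.

Let eval (c : {poly %/ h}) : A := (val c).[x].

Let eval_in p : eval (in_qpoly h p) = p.[x].
Proof.
rewrite /eval /= [in RHS](Pdiv.RingMonic.rdivp_eq (monic_mk_monic h) p).
by rewrite hornerD hornerM (rootP hx) mulr0 add0r.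
Qed.

Let eval_is_zmod_morphism : zmod_morphism eval.
Proof. by move=> a b; rewrite /eval /= hornerD hornerN. Qed.

Let eval_is_monoid_morphism : monoid_morphism eval.
Proof.
split=> [|a b]; first by rewrite /eval /= hornerC.
(* The product of {poly %/ h} is, by definition, the reduced polynomial product. *)
by rewrite -[a * b]/(in_qpoly h (val a * val b)) eval_in hornerM.
Qed.

Definition qpoly_eval : {rmorphism {poly %/ h} -> A} :=
  HB.pack eval (GRing.isZmodMorphism.Build _ _ eval eval_is_zmod_morphism)
    (GRing.isMonoidMorphism.Build _ _ eval eval_is_monoid_morphism).

Lemma qpoly_eval_in p : qpoly_eval (in_qpoly h p) = p.[x].
Proof. exact: eval_in. Qed.

Lemma qpoly_evalC a : qpoly_eval (qpolyC h a) = a.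
Proof. by rewrite -in_qpolyC qpoly_eval_in hornerC. Qed.

End QpolyEval.

Section SplitCyclic.
Variables (F : fieldType) (e : nat) (z : F).
Hypothesis z_prim : e.-primitive_root z.

Local Notation R := {poly %/ ('X^e - 1 : {poly F})}.

Let e_gt0 : (0 < e)%N := prim_order_gt0 z_prim.

Lemma prim_expr_ord_inj : injective (fun i : 'I_e => z ^+ i).
Proof.
by move=> i j /eqP; rewrite (eq_prim_root_expr z_prim) !modn_small // => /eqP /val_inj.
Qed.

Lemma root_prim_expr k : root (mk_monic ('X^e - 1 : {poly F})) (z ^+ k).
Proof.
rewrite mk_monic_Xn_sub1 //.
by apply/unity_rootP; rewrite exprAC (prim_expr_order z_prim) expr1n.
Qed.

Definition eval_pow k : {rmorphism R -> F} := qpoly_eval (root_prim_expr k).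

Lemma eval_pow_inj (a b : R) : (forall k : 'I_e, eval_pow k a = eval_pow k b) -> a = b.
Proof.
move=> eval_ab; apply/eqP; rewrite -subr_eq0; apply/eqP; apply: val_inj => /=.
apply: (@roots_geq_poly_eq0 _ _ [seq z ^+ (val k) | k <- enum 'I_e]).
- apply/allP => _ /mapP [k _ ->]; apply/rootP.
  by change (eval_pow k (a - b) = 0); rewrite rmorphB eval_ab subrr.
- by rewrite map_inj_uniq ?enum_uniq //; exact: prim_expr_ord_inj.
- rewrite size_map size_enum_ord -ltnS.
  have size_h : size (mk_monic ('X^e - 1 : {poly F})) = e.+1.
    by rewrite mk_monic_Xn_sub1 // size_XnsubC.
  by have := size_mk_monic (a - b); rewrite [X in (_ < X)%N]size_h.
Qed.

Definition lagrange_poly (i : 'I_e) : {poly F} :=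
  let p := \prod_(j < e | j != i) ('X - (z ^+ j)%:P) in p.[z ^+ i]^-1 *: p.

Lemma lagrange_poly_sample (i k : 'I_e) : (lagrange_poly i).[z ^+ k] = (k == i)%:R.
Proof.
rewrite /lagrange_poly hornerZ; set p := \prod_(_ < _ | _) _.
have [->|ki] := eqVneq k i.
  rewrite mulVf // horner_prod; apply/prodf_neq0 => j ji.
  by rewrite hornerXsubC subr_eq0 (inj_eq prim_expr_ord_inj) eq_sym.
by rewrite [p.[_ ^+ k]]horner_prod (bigD1 k) //= hornerXsubC subrr mul0r mulr0.
Qed.

Definition lagrange_idem (i : 'I_e) : R := in_qpoly _ (lagrange_poly i).

Lemma eval_pow_idem (k i : 'I_e) : eval_pow k (lagrange_idem i) = (k == i)%:R.
Proof. by rewrite qpoly_eval_in lagrange_poly_sample. Qed.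

Lemma lagrange_idem_orth i j :
  lagrange_idem i * lagrange_idem j = if i == j then lagrange_idem i else 0.
Proof.
apply: eval_pow_inj => k; rewrite rmorphM !eval_pow_idem; have [<-|ij] := eqVneq i j.
  by rewrite eval_pow_idem -natrM mulnb andbb.
rewrite rmorph0; have [->|_] := eqVneq k i; last by rewrite mul0r.
by rewrite (negbTE ij) mulr0.
Qed.

Lemma lagrange_idem_decomp c : c = \sum_i lagrange_idem i * qpolyC _ (eval_pow i c).
Proof.
apply: eval_pow_inj => k; rewrite rmorph_sum.
under eq_bigr do rewrite rmorphM eval_pow_idem qpoly_evalC.
rewrite (bigD1 k) // big1 /= => [|i /negbTE ik]; last by rewrite eq_sym ik mul0r.
by rewrite eqxx mul1r addr0.
Qed.

Variable n : nat.

Local Notation T := {poly %/ ('X^n - 1 : {poly R})}.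

Definition cyc_idem i : T := qpolyC _ (lagrange_idem i).

Definition cyc_embed : {rmorphism {poly F} -> T} :=
  in_qpoly _ \o map_poly (qpolyC ('X^e - 1 : {poly F})).

Lemma cyc_embedE p : cyc_embed p = in_qpoly _ (map_poly (qpolyC _) p).
Proof. by []. Qed.

Lemma cyc_idem_orth i j : cyc_idem i * cyc_idem j = if i == j then cyc_idem i else 0.
Proof. by rewrite -rmorphM lagrange_idem_orth; case: eqP; rewrite ?rmorph0. Qed.

Lemma cyc_span (t : T) :
  t = \sum_i cyc_idem i * cyc_embed (map_poly (eval_pow i) (val t)).
Proof.
rewrite -[t in LHS]val_qpolyK.
under eq_bigr do rewrite /cyc_idem -in_qpolyC cyc_embedE -map_poly_comp -rmorphM.
rewrite -rmorph_sum; congr in_qpoly; apply/polyP => k.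
rewrite coef_sum [LHS]lagrange_idem_decomp; apply: eq_bigr => i _.
by rewrite coefCM coef_map.
Qed.

Lemma cyc_principal_ideal_ring : principal_ideal_ring T.
Proof.
have span t : exists f, t = \sum_i cyc_idem i * cyc_embed (f i).
  by exists (fun i : 'I_e => map_poly (eval_pow i) (val t)); exact: cyc_span.
exact: principal_ideal_ring_idem_decomp cyc_idem_orth span
  (@poly_principal_ideal_ring F).
Qed.

End SplitCyclic.

Lemma finField_prim_root_exists (F : finFieldType) d :
  (0 < d)%N -> (d %| #|F|.-1)%N -> exists z : F, d.-primitive_root z.
Proof.
move=> d_gt0 d_dvd; have F_gt1 := card_finNzRing_gt1 F.
set units := [seq x <- enum F | x != 0].
have : has (#|F|.-1).-primitive_root units.
  apply: has_prim_root; first by rewrite -ltnS prednK // ltnW.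
  - apply/allP => x; rewrite mem_filter => /andP [x_neq0 _].
    apply/unity_rootP; apply: (mulfI x_neq0).
    by rewrite -exprS prednK ?expf_card ?mulr1 // ltnW.
  - by rewrite filter_uniq ?enum_uniq.
  - rewrite -(cardC1 (0 : F)) cardE; apply: eq_leq; congr size.
    by rewrite /units enumT /enum_mem; apply: eq_filter => x; rewrite !inE.
by case/hasP => w _ w_prim; exists (w ^+ (#|F|.-1 %/ d)); exact: dvdn_prim_root.
Qed.

Local Close Scope ring_scope.

Theorem corollary3p6 (F : finFieldType) (p m e t n : nat) :
  prime p -> odd p -> #|F| = p ^ m -> #|F| = e * t + 1 ->
  2 <= e -> 1 <= t -> 0 < n ->
  principal_ideal_ring (cyc_ring F e n).
Proof.
move=> _ _ _ card_F e_ge2 _ _.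
have e_dvd : e %| #|F|.-1 by rewrite card_F addn1 dvdn_mulr.
have [z z_prim] := finField_prim_root_exists (ltnW e_ge2) e_dvd.
exact: cyc_principal_ideal_ring z_prim n.
Qed.
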